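(* Let $\mathfrak g=\bigoplus_{i=1}^{r}\mathfrak g_i$ be a Lie algebra decomposed as a direct sum of ideals, and let $k\ge1$. For each $i$, let $\mathcal{L}\mathrm{Der}_k(\mathfrak g_i,\mathfrak g_i)$ be the set of linear maps $f:\mathfrak g\to\mathfrak g$ with $f(\mathfrak g_l)=0$ for $l\ne i$, $f(\mathfrak g_i)\subseteq\mathfrak g_i$ and $f|_{\mathfrak g_i}\in\mathcal{L}\mathrm{Der}_k(\mathfrak g_i)$. For $i\ne j$, let $\mathcal{L}\mathrm{Der}_k(\mathfrak g_i,\mathfrak g_j)$ be the set of linear maps $f:\mathfrak g\to\mathfrak g$ such that $f(\mathfrak g_l)=0$ for all $l\ne i$, $f(\mathfrak g)\subseteq\mathfrak g_j$, $f([y_1,\dots,y_{k+1}])=0$ for all $y_1,\dots,y_{k+1}\in\mathfrak g_i$, and for every position $s\in\{1,\dots,k+1\}$ one has $[z_1,\dots,z_{s-1},f(y),z_{s+1},\dots,z_{k+1}]=0$ for all $y\in\mathfrak g_i$ and all $z_t\in\mathfrak g_j$. Then $$\mathcal{L}\mathrm{Der}_k(\mathfrak g)=\sum_{i,j}\mathcal{L}\mathrm{Der}_k(\mathfrak g_i,\mathfrak g_j).$$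
   Context: All Lie algebras are finite-dimensional over an algebraically closed field $\mathbb F$ of characteristic zero. For a Lie algebra $\mathfrak g$, an integer $k\ge1$ and $x_1,\dots,x_{k+1}\in\mathfrak g$, write $[x_1,\dots,x_{k+1}]$ for the right-nested bracket $[x_1,[x_2,[\dots,[x_k,x_{k+1}]\dots]]]$. A Leibniz-derivation of order $k$ of $\mathfrak g$ is a linear map $P:\mathfrak g\to\mathfrak g$ such that $P([x_1,\dots,x_{k+1}])=\sum_{i=1}^{k+1}[x_1,\dots,x_{i-1},P(x_i),x_{i+1},\dots,x_{k+1}]$ for all $x_1,\dots,x_{k+1}\in\mathfrak g$; the set of these is denoted $\mathcal{L}\mathrm{Der}_k(\mathfrak g)$. *)

From HB Require Import structures.
From mathcomp Require Import all_boot all_order all_algebra.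
Set Implicit Arguments. Unset Strict Implicit. Unset Printing Implicit Defensive.
Import GRing.Theory.
Local Open Scope ring_scope.

Section LieDefs.
Variables (F : fieldType) (V : vectType F).

Definition lie_bracket (br : V -> V -> V) : Prop :=
  [/\ forall (a : F) (x y z : V), br (a *: x + y) z = a *: br x z + br y z,
      forall (a : F) (x y z : V), br z (a *: x + y) = a *: br z x + br z y,
      forall x : V, br x x = 0 &
      forall x y z : V, br x (br y z) + br y (br z x) + br z (br x y) = 0].

Fixpoint nested (br : V -> V -> V) (s : seq V) : V :=
  match s with
  | [::] => 0
  | [:: x] => x
  | x :: s' => br x (nested br s')
  end.

Definition nbr (br : V -> V -> V) (k : nat) (x : 'I_k.+1 -> V) : V :=
  nested br [seq x t | t <- enum 'I_k.+1].

Definition upd (k : nat) (x : 'I_k.+1 -> V) (s : 'I_k.+1) (v : V) : 'I_k.+1 -> V :=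
  fun t => if t == s then v else x t.

Definition LDer_on (br : V -> V -> V) (k : nat) (U : {vspace V}) (P : 'End(V)) : Prop :=
  forall x : 'I_k.+1 -> V, (forall t, x t \in U) ->
    P (nbr br x) = \sum_(s < k.+1) nbr br (upd x s (P (x s))).

Definition LDer (br : V -> V -> V) (k : nat) (P : 'End(V)) : Prop :=
  LDer_on br k fullv P.

Definition LDer_ij (br : V -> V -> V) (k r : nat) (g : 'I_r -> {vspace V})
    (i j : 'I_r) (f : 'End(V)) : Prop :=
  if i == j then
    [/\ forall l, l != i -> forall y, y \in g l -> f y = 0,
        forall y, y \in g i -> f y \in g i &
        LDer_on br k (g i) f]
  else
    [/\ forall l, l != i -> forall y, y \in g l -> f y = 0,
        forall v, f v \in g j,
        forall y : 'I_k.+1 -> V, (forall t, y t \in g i) -> f (nbr br y) = 0 &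
        forall (s : 'I_k.+1) (y : V) (z : 'I_k.+1 -> V),
          y \in g i -> (forall t, z t \in g j) ->
          nbr br (upd z s (f y)) = 0].

End LieDefs.

From HB Require Import structures.
From mathcomp Require Import all_boot all_order all_algebra.
Set Implicit Arguments. Unset Strict Implicit. Unset Printing Implicit Defensive.
Import GRing.Theory.
Local Open Scope ring_scope.

(* Both sides of the Leibniz identity are additive in each argument, so it
   suffices to check it on tuples whose entries each lie in a single ideal
   g_l; a nested bracket of such a tuple vanishes as soon as two entries lie
   in different ideals.  For P in LDer_k(g) the blocks pi_j o P o pi_i are the
   required summands: when all entries but the s-th lie in g_i, only the
   g_i-component of the s-th entry contributes to the bracket.  Conversely,
   each element of some LDer_k(g_i, g_j) satisfies the identity on such
   tuples, by a case analysis on where the entries lie. *)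

Section LieBracket.
Variables (F : fieldType) (V : vectType F) (br : V -> V -> V).
Hypothesis Hlie : lie_bracket br.

Lemma brDl x y z : br (x + y) z = br x z + br y z.
Proof. by case: Hlie => HZDl _ _ _; have := HZDl 1 x y z; rewrite !scale1r. Qed.

Lemma brDr x y z : br z (x + y) = br z x + br z y.
Proof. by case: Hlie => _ HZDr _ _; have := HZDr 1 x y z; rewrite !scale1r. Qed.

Lemma br_antisym x y : br x y = - br y x.
Proof.
case: Hlie => _ _ Hxx _; apply/eqP; rewrite -addr_eq0.
by have := Hxx (x + y); rewrite brDl !brDr !Hxx add0r addr0 => ->.
Qed.

Definition lie_ideal (U : {vspace V}) := forall x y, y \in U -> br x y \in U.

Lemma lie_idealC U x y : lie_ideal U -> x \in U -> br x y \in U.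
Proof. by move=> HU Ux; rewrite br_antisym memvN HU. Qed.

Lemma nested_cons x s : s != [::] -> nested br (x :: s) = br x (nested br s).
Proof. by case: s. Qed.

Lemma nested_mem_ideal U s :
  lie_ideal U -> has (fun v => v \in U) s -> nested br s \in U.
Proof.
move=> HU; elim: s => [|x s IH] //= /orP[Ux|Us].
  by case: s {IH} => [|y s] //; apply: lie_idealC.
by case: s IH Us => [|y s] // IH /IH; apply: HU.
Qed.

Lemma nbr_mem_ideal U k (x : 'I_k.+1 -> V) t :
  lie_ideal U -> x t \in U -> nbr br x \in U.
Proof.
move=> HU Uxt; apply: nested_mem_ideal => //; apply/hasP.
by exists (x t); rewrite // map_f ?mem_enum.
Qed.

Lemma nested_cat_linear s1 s2 a u v :
  nested br (s1 ++ (a *: u + v) :: s2) =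
  a *: nested br (s1 ++ u :: s2) + nested br (s1 ++ v :: s2).
Proof.
case: Hlie => HZDl HZDr _ _; elim: s1 => [|y s1 IH]; first by case: s2 => // w s2; rewrite /= HZDl.
have nonnil w : s1 ++ w :: s2 != [::] by case: s1 {IH}.
by rewrite !cat_cons !nested_cons // IH HZDr.
Qed.

Lemma eq_nbr k (x y : 'I_k.+1 -> V) : x =1 y -> nbr br x = nbr br y.
Proof. by move=> xy; rewrite /nbr (eq_map xy). Qed.

Lemma nbr_updE k (x : 'I_k.+1 -> V) s :
  exists s1 s2, forall w, nbr br (upd x s w) = nested br (s1 ++ w :: s2).
Proof.
rewrite /nbr; have := enum_uniq 'I_k.+1; have := mem_enum 'I_k.+1 s.
move: (enum 'I_k.+1) => e /splitPr[e1 e2].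
rewrite cat_uniq /= => /and3P[_ /norP[e1s _] /andP[e2s _]].
exists (map x e1), (map x e2) => w; rewrite map_cat /= /upd eqxx.
congr (nested br (_ ++ _ :: _)); apply/eq_in_map => t et.
  by case: eqP et => // ->; rewrite (negPf e1s).
by case: eqP et => // ->; rewrite (negPf e2s).
Qed.

Definition nbr_slot k (x : 'I_k.+1 -> V) s w := nbr br (upd x s w).

Fact nbr_slot_is_linear k (x : 'I_k.+1 -> V) s : linear (nbr_slot x s).
Proof.
by move=> a u v; have [s1 [s2 E]] := nbr_updE x s; rewrite /nbr_slot !E nested_cat_linear.
Qed.

HB.instance Definition _ k x s :=
  GRing.isLinear.Build F V V *:%R (@nbr_slot k x s) (nbr_slot_is_linear x s).

Lemma nbr_updD k (x : 'I_k.+1 -> V) s u v :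
  nbr br (upd x s (u + v)) = nbr br (upd x s u) + nbr br (upd x s v).
Proof. exact: (linearD (nbr_slot x s)). Qed.

Lemma nbr_upd0 k (x : 'I_k.+1 -> V) s : nbr br (upd x s 0) = 0.
Proof. exact: (linear0 (nbr_slot x s)). Qed.

Lemma nbr_upd_sum k (x : 'I_k.+1 -> V) s (I : finType) (w : I -> V) :
  nbr br (upd x s (\sum_i w i)) = \sum_i nbr br (upd x s (w i)).
Proof. exact: (linear_sum (nbr_slot x s)). Qed.

Lemma upd_eq k (x : 'I_k.+1 -> V) s w : upd x s w s = w.
Proof. by rewrite /upd eqxx. Qed.

Lemma upd_neq k (x : 'I_k.+1 -> V) s t w : t != s -> upd x s w t = x t.
Proof. by rewrite /upd => /negPf ->. Qed.

Lemma upd_id k (x : 'I_k.+1 -> V) s : upd x s (x s) =1 x.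
Proof. by move=> t; rewrite /upd; case: eqP => [->|]. Qed.

Lemma upd_upd k (x : 'I_k.+1 -> V) s a b : upd (upd x s a) s b =1 upd x s b.
Proof. by move=> t; rewrite /upd; case: eqP. Qed.

Lemma upd_updC k (x : 'I_k.+1 -> V) s t a b :
  t != s -> upd (upd x s a) t b =1 upd (upd x t b) s a.
Proof.
move=> ts u; rewrite /upd.
by have [->|_] := eqVneq u t; [rewrite (negPf ts) | case: eqP].
Qed.

Definition leibniz_defect k (P : 'End(V)) (x : 'I_k.+1 -> V) :=
  P (nbr br x) - \sum_(s < k.+1) nbr br (upd x s (P (x s))).

Lemma LDer_onP k U P :
  LDer_on br k U P <->
  (forall x : 'I_k.+1 -> V, (forall t, x t \in U) -> leibniz_defect P x = 0).
Proof.
rewrite /leibniz_defect.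
by split=> HP x /HP; [move->; rewrite subrr | move/eqP; rewrite subr_eq0 => /eqP].
Qed.

Lemma eq_leibniz_defect k P (x y : 'I_k.+1 -> V) :
  x =1 y -> leibniz_defect P x = leibniz_defect P y.
Proof.
move=> xy; rewrite /leibniz_defect (eq_nbr xy); congr (_ - _).
by apply: eq_bigr => s _; rewrite xy; apply: eq_nbr => t; rewrite /upd xy.
Qed.

Lemma leibniz_defectD k (x : 'I_k.+1 -> V) P Q :
  leibniz_defect (P + Q) x = leibniz_defect P x + leibniz_defect Q x.
Proof.
rewrite /leibniz_defect !add_lfunE addrACA -opprD -big_split /=.
by congr (_ - _); apply: eq_bigr => s _; rewrite add_lfunE nbr_updD.
Qed.

Lemma leibniz_defect0 k (x : 'I_k.+1 -> V) : leibniz_defect 0 x = 0.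
Proof.
rewrite /leibniz_defect zero_lfunE big1 ?subr0 // => s _.
by rewrite zero_lfunE nbr_upd0.
Qed.

Lemma leibniz_defect_updD k P (x : 'I_k.+1 -> V) s u v :
  leibniz_defect P (upd x s (u + v)) =
  leibniz_defect P (upd x s u) + leibniz_defect P (upd x s v).
Proof.
rewrite /leibniz_defect nbr_updD linearD addrACA -opprD -big_split /=.
congr (_ - _); apply: eq_bigr => t _; have [->|ts] := eqVneq t s.
  by rewrite !(eq_nbr (upd_upd _ _ _ _)) !upd_eq linearD nbr_updD.
by rewrite !upd_neq // !(eq_nbr (upd_updC _ _ _ ts)) nbr_updD.
Qed.


Section Decomposition.
Variables (r : nat) (g : 'I_r -> {vspace V}).
Hypothesis Hideal : forall i, lie_ideal (g i).
Hypothesis Hdirect : directv (\sum_(i < r) g i)%VS.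
Hypothesis Hfull : (\sum_(i < r) g i)%VS = fullv.

Definition pi i : 'End(V) := sumv_pi_for (esym Hfull) i.

Lemma pi_mem i v : pi i v \in g i.
Proof. exact: memv_sum_pi. Qed.

Lemma pi_sum v : \sum_i pi i v = v.
Proof. exact: (sumv_pi_sum _ (memvf v)). Qed.

Lemma pi_uniq (u : 'I_r -> V) v :
  (forall i, u i \in g i) -> \sum_i u i = v -> forall i, pi i v = u i.
Proof.
move=> gu uv i; apply/eqP; have /directv_sum_unique uniq_dec := Hdirect.
have: \sum_i pi i v == \sum_i u i by rewrite pi_sum uv.
by rewrite uniq_dec => [/forallP/(_ i)|j _|j _]; rewrite ?pi_mem ?gu.
Qed.

Lemma pi_id i v : v \in g i -> pi i v = v.
Proof.
move=> gv; rewrite (@pi_uniq (fun j => if j == i then v else 0) v) ?eqxx //.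
  by move=> j; case: eqP => [->|]; rewrite ?mem0v.
by rewrite (bigD1 i) //= eqxx big1 ?addr0 // => j /negPf ->.
Qed.

Lemma pi_eq0 i j v : v \in g j -> i != j -> pi i v = 0.
Proof.
move=> gv ij; rewrite (@pi_uniq (fun l => if l == j then v else 0) v) ?(negPf ij) //.
  by move=> l; case: eqP => [->|]; rewrite ?mem0v.
by rewrite (bigD1 j) //= eqxx big1 ?addr0 // => l /negPf ->.
Qed.

Lemma memg_eq0 a b v : v \in g a -> v \in g b -> a != b -> v = 0.
Proof. by move=> ga gb ab; rewrite -(pi_id ga) (pi_eq0 gb ab). Qed.

Lemma memg_addl_eq0 a b u v :
  u \in g a -> v \in g b -> a != b -> u + v = 0 -> u = 0.
Proof.
move=> ga gb ab /(congr1 (pi a)).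
by rewrite linearD /= (pi_id ga) (pi_eq0 gb ab) linear0 addr0.
Qed.

Variable k : nat.

Lemma nbr_mixed_eq0 (x : 'I_k.+1 -> V) a b ta tb :
  x ta \in g a -> x tb \in g b -> a != b -> nbr br x = 0.
Proof.
move=> ga gb; apply: memg_eq0; first exact: nbr_mem_ideal (@Hideal a) ga.
exact: nbr_mem_ideal (@Hideal b) gb.
Qed.

Hypothesis k_gt0 : (0 < k)%N.

Lemma exists_neq (s : 'I_k.+1) : exists t, t != s.
Proof.
have [->|s0] := eqVneq s ord0; last by exists ord0; rewrite eq_sym.
by exists ord_max; rewrite -val_eqE /= -lt0n.
Qed.

(* This is where k >= 1 is used: some entry other than the s-th lies in g_i,
   so the other components of w give brackets mixing two ideals. *)
Lemma nbr_upd_pi (x : 'I_k.+1 -> V) s i w :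
  (forall t, t != s -> x t \in g i) ->
  nbr br (upd x s w) = nbr br (upd x s (pi i w)).
Proof.
move=> gx; have [t ts] := exists_neq s.
rewrite -{1}(pi_sum w) nbr_upd_sum (bigD1 i) //= big1 ?addr0 // => l li.
by apply: (@nbr_mixed_eq0 _ l i s t); rewrite ?upd_eq ?upd_neq ?pi_mem ?gx.
Qed.


Definition block (P : 'End(V)) i j : 'End(V) := (pi j \o P \o pi i)%VF.

Lemma blockE P i j v : block P i j v = pi j (P (pi i v)).
Proof. by rewrite /block !comp_lfunE. Qed.

Lemma block_sum P : \sum_i \sum_j block P i j = P.
Proof.
apply/lfunP => v; rewrite sum_lfunE -[X in _ = P X]pi_sum linear_sum.
apply: eq_bigr => i _; rewrite sum_lfunE -[RHS]pi_sum.
by apply: eq_bigr => j _; rewrite blockE.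
Qed.

Lemma block_out P i j l y : l != i -> y \in g l -> block P i j y = 0.
Proof. by move=> li gy; rewrite blockE (pi_eq0 gy) 1?eq_sym // !linear0. Qed.

Lemma LDer_on_block_diag P i : LDer br k P -> LDer_on br k (g i) (block P i i).
Proof.
move=> HP x gx; rewrite blockE (pi_id (nbr_mem_ideal (@Hideal i) (gx ord0))).
rewrite (HP x (fun _ => memvf _)) linear_sum; apply: eq_bigr => s _.
rewrite blockE (pi_id (gx s)) (nbr_upd_pi (i := i)) => [|t _]; last exact: gx.
by apply: pi_id; apply: (nbr_mem_ideal (@Hideal i) (t := s)); rewrite upd_eq pi_mem.
Qed.

Lemma block_nbr_eq0 P i j (y : 'I_k.+1 -> V) :
  LDer br k P -> i != j -> (forall t, y t \in g i) -> block P i j (nbr br y) = 0.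
Proof.
move=> HP ij gy; rewrite blockE (pi_id (nbr_mem_ideal (@Hideal i) (gy ord0))).
rewrite (HP y (fun _ => memvf _)); apply: (pi_eq0 (j := i)); last by rewrite eq_sym.
apply: memv_suml => s _; have [t ts] := exists_neq s.
by apply: (nbr_mem_ideal (@Hideal i) (t := t)); rewrite upd_neq.
Qed.

(* The bracket with y in slot s vanishes, and expanding it by the Leibniz rule
   isolates the g_j-valued term below from terms lying in g_i. *)
Lemma nbr_upd_block_eq0 P i j s y (z : 'I_k.+1 -> V) :
  LDer br k P -> i != j -> y \in g i -> (forall t, z t \in g j) ->
  nbr br (upd z s (block P i j y)) = 0.
Proof.
move=> HP ij gy gz; have [t ts] := exists_neq s.
have zy0 : nbr br (upd z s y) = 0.
  by apply: (@nbr_mixed_eq0 _ i j s t); rewrite ?upd_eq ?upd_neq.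
have := HP (upd z s y) (fun _ => memvf _).
rewrite zy0 linear0 (bigD1 s) //= (eq_nbr (upd_upd _ _ _ _)) upd_eq => /esym.
rewrite blockE (pi_id gy) -(nbr_upd_pi (i := j)) // => /memg_addl_eq0; apply.
- by apply: (nbr_mem_ideal (@Hideal j) (t := t)); rewrite upd_neq.
- apply: memv_suml => u us; apply: (nbr_mem_ideal (@Hideal i) (t := s)).
  by rewrite upd_neq 1?eq_sym // upd_eq.
- by rewrite eq_sym.
Qed.

Lemma LDer_ij_block P i j : LDer br k P -> LDer_ij br k g i j (block P i j).
Proof.
move=> HP; rewrite /LDer_ij; have [<-|ij] := eqVneq i j.
  split=> [l li y|y _|]; [exact: block_out | by rewrite blockE pi_mem |].
  exact: LDer_on_block_diag.
split=> [l li y|v|y|s y z]; [exact: block_out | by rewrite blockE pi_mem | |].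
  exact: block_nbr_eq0.
exact: nbr_upd_block_eq0.
Qed.

Definition homogeneous (x : 'I_k.+1 -> V) := forall t, exists l, x t \in g l.

Lemma slot_additive_eq0 (Phi : ('I_k.+1 -> V) -> V) :
    (forall x s u v, Phi (upd x s (u + v)) = Phi (upd x s u) + Phi (upd x s v)) ->
    (forall x y, x =1 y -> Phi x = Phi y) ->
    (forall x, homogeneous x -> Phi x = 0) ->
  forall x, Phi x = 0.
Proof.
move=> PhiD eq_Phi Phi_hom.
suff PhiP m : (m <= k.+1)%N -> forall x : 'I_k.+1 -> V,
    (forall t : 'I_k.+1, (m <= t)%N -> exists l, x t \in g l) -> Phi x = 0.
  by move=> x; apply: (PhiP k.+1) => // t; rewrite leqNgt ltn_ord.
elim: m => [_ x xh|m IH lt_mk x xh]; first by apply: Phi_hom => t; apply: xh.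
pose s := Ordinal lt_mk.
have Phi0 y : Phi (upd y s 0) = 0.
  by apply: (addrI (Phi (upd y s 0))); rewrite -PhiD !addr0.
rewrite -(eq_Phi _ _ (upd_id x s)) -(pi_sum (x s)).
rewrite (big_morph (fun w => Phi (upd x s w)) (PhiD x s) (Phi0 x)) big1 // => l _.
apply: IH => [|t]; first exact: ltnW.
have [->|ts] := eqVneq t s; first by exists l; rewrite upd_eq pi_mem.
rewrite upd_neq // => le_mt; apply: xh; rewrite ltn_neqAle le_mt andbT.
by apply: contra ts => /eqP mt; apply/eqP/val_inj.
Qed.

Section VanishingOff.
Variables (i : 'I_r) (f : 'End(V)).
Hypothesis f_out : forall l, l != i -> forall y, y \in g l -> f y = 0.

Lemma vanishing_off_nbr (x : 'I_k.+1 -> V) t :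
  homogeneous x -> x t \notin g i -> f (nbr br x) = 0.
Proof.
move=> xh xt; have [l gxt] := xh t; apply: (f_out (l := l)).
  by apply: contraNneq xt => <-.
exact: nbr_mem_ideal (@Hideal l) gxt.
Qed.

Lemma vanishing_off_slot (x : 'I_k.+1 -> V) s :
  homogeneous x -> x s \notin g i -> nbr br (upd x s (f (x s))) = 0.
Proof.
move=> xh xs; have [l gxs] := xh s; rewrite (f_out (l := l)) ?nbr_upd0 //.
by apply: contraNneq xs => <-.
Qed.

End VanishingOff.

Lemma leibniz_defect_diag i f (x : 'I_k.+1 -> V) :
  LDer_ij br k g i i f -> homogeneous x -> leibniz_defect f x = 0.
Proof.
rewrite /LDer_ij eqxx => -[f_out fi /LDer_onP Lf] xh.
have [/forallP|/forallPn[t0 xt0]] := boolP [forall t, x t \in g i]; first exact: Lf.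
rewrite /leibniz_defect (vanishing_off_nbr f_out xh xt0) sub0r big1 ?oppr0 // => s _.
have [gxs|xs] := boolP (x s \in g i); last exact: (vanishing_off_slot f_out).
have [l0 gxt0] := xh t0.
apply: (@nbr_mixed_eq0 _ i l0 s t0); rewrite ?upd_eq ?fi //.
  by rewrite upd_neq //; apply: contraNneq xt0 => ->.
by apply: contraNneq xt0 => ->.
Qed.

Lemma leibniz_defect_offdiag i j f (x : 'I_k.+1 -> V) :
  i != j -> LDer_ij br k g i j f -> homogeneous x -> leibniz_defect f x = 0.
Proof.
move=> ij; rewrite /LDer_ij (negPf ij) => -[f_out fj f_nbr f_slot] xh.
rewrite /leibniz_defect.
have [/forallP gx|/forallPn[t0 xt0]] := boolP [forall t, x t \in g i].
  rewrite f_nbr // sub0r big1 ?oppr0 // => s _; have [t ts] := exists_neq s.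
  by apply: (@nbr_mixed_eq0 _ j i s t); rewrite ?upd_eq ?upd_neq // eq_sym.
rewrite (vanishing_off_nbr f_out xh xt0) sub0r big1 ?oppr0 // => s _.
have [gxs|xs] := boolP (x s \in g i); last exact: (vanishing_off_slot f_out).
have [/forallP gx|/forallPn[t]] := boolP [forall t, (t != s) ==> (x t \in g j)].
  rewrite -(eq_nbr (upd_upd x s 0 _)); apply: f_slot => // t.
  by have [->|ts] := eqVneq t s; rewrite ?upd_eq ?mem0v ?upd_neq ?(implyP (gx t)).
rewrite negb_imply => /andP[ts xt]; have [l gxt] := xh t.
apply: (@nbr_mixed_eq0 _ j l s t); rewrite ?upd_eq ?upd_neq ?fj //.
by apply: contraNneq xt => ->.
Qed.

Lemma LDer_sum_LDer_ij (f : 'I_r -> 'I_r -> 'End(V)) :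
  (forall i j, LDer_ij br k g i j (f i j)) -> LDer br k (\sum_i \sum_j f i j).
Proof.
move=> Hf; apply/LDer_onP => x _; apply: slot_additive_eq0 => [|y z|{}x xh].
- exact: leibniz_defect_updD.
- exact: eq_leibniz_defect.
rewrite (big_morph _ (leibniz_defectD x) (leibniz_defect0 x)) big1 // => i _.
rewrite (big_morph _ (leibniz_defectD x) (leibniz_defect0 x)) big1 // => j _.
have [<-|ij] := eqVneq i j; first exact: leibniz_defect_diag.
exact: (leibniz_defect_offdiag ij).
Qed.

End Decomposition.
End LieBracket.

Theorem lemma3 (F : closedFieldType) (charF0 : [pchar F] =i pred0)
    (V : vectType F) (br : V -> V -> V) (Hlie : lie_bracket br)
    (r : nat) (g : 'I_r -> {vspace V})
    (Hideal : forall (i : 'I_r) (x y : V), y \in g i -> br x y \in g i)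
    (Hdirect : directv (\sum_(i < r) g i)%VS)
    (Hfull : (\sum_(i < r) g i)%VS = fullv)
    (k : nat) (Hk : (1 <= k)%N) :
  forall P : 'End(V),
    LDer br k P <->
    exists f : 'I_r -> 'I_r -> 'End(V),
      (forall i j, LDer_ij br k g i j (f i j)) /\
      P = \sum_(i < r) \sum_(j < r) f i j.
Proof.
move=> P; split=> [HP|[f [Hf ->]]].
  exists (block Hfull P); split; last by rewrite block_sum.
  by move=> i j; apply: (LDer_ij_block Hlie Hideal Hdirect Hfull Hk).
exact: (LDer_sum_LDer_ij Hlie Hideal Hdirect Hfull Hk).
Qed.
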